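(* Let $V:\mathbb{Z}\to\mathbb{R}$ with $|V(j)|\to0$ as $|j|\to\infty$ and $H=-\Delta+V$ on $\ell^2(\mathbb{Z})$, where $(\Delta u)(j)=u(j+1)-2u(j)+u(j-1)$. Let $e\in\mathbb{R}\setminus[0,4]$ be an eigenvalue of $H$ with $\dim\ker(H-e)=1$. For $a>0$ let $(T_au)(j)=e^{a|j|}u(j)$. Then for all sufficiently small $a>0$ there exist $e_a\in\mathbb{R}$ and $\phi_a\in\ell^2(\mathbb{Z})\setminus\{0\}$ such that $e_a\to e$ as $a\to0$ and $$T_a(-\Delta+V)T_a^{-1}\phi_a=e_a\phi_a.$$ *)

From Stdlib Require Import Reals ZArith.
From Coquelicot Require Import Coquelicot.

Definition l2 (u : Z -> C) : Prop :=
  ex_series (fun n : nat => (Cmod (u (Z.of_nat n)) ^ 2)%R) /\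
  ex_series (fun n : nat => (Cmod (u (- Z.of_nat n)%Z) ^ 2)%R).

Definition lap (u : Z -> C) (j : Z) : C :=
  Cplus (Cminus (u (j + 1)%Z) (Cmult (RtoC 2) (u j))) (u (j - 1)%Z).

Definition Hop (V : Z -> R) (u : Z -> C) (j : Z) : C :=
  Cplus (Copp (lap u j)) (Cmult (RtoC (V j)) (u j)).

Definition Ta (a : R) (u : Z -> C) (j : Z) : C :=
  Cmult (RtoC (exp (a * IZR (Z.abs j)))) (u j).
Definition Tainv (a : R) (u : Z -> C) (j : Z) : C :=
  Cmult (RtoC (exp (- (a * IZR (Z.abs j))))) (u j).

Definition vanishes_at_infinity (V : Z -> R) : Prop :=
  forall eps : R, (0 < eps)%R ->
    exists N : Z, forall j : Z, (N < Z.abs j)%Z -> (Rabs (V j) < eps)%R.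

Definition ker_dim_one (V : Z -> R) (e : R) : Prop :=
  exists u0 : Z -> C,
    l2 u0 /\ (exists j, u0 j <> RtoC 0) /\
    (forall j, Hop V u0 j = Cmult (RtoC e) (u0 j)) /\
    (forall u : Z -> C, l2 u -> (forall j, Hop V u j = Cmult (RtoC e) (u j)) ->
       exists c : C, forall j, u j = Cmult c (u0 j)).

(* Since e lies at distance d > 0 from [0,4] and V vanishes at infinity, the
   eigenvalue equation u(j+1) + u(j-1) = (2 + V j - e) u(j) forces, for |j|
   large, |u(j+1)| + |u(j-1)| >= K |u(j)| with K = 2 + d/2 > 2.  For a
   square-summable sequence this can only happen if |u| decays at least like
   (2/K)^|j|.  Hence for a < ln(K/2) the vector T_a u is still in l^2, and it is
   an eigenvector of T_a H T_a^-1 for the same eigenvalue e_a := e. *)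

From Stdlib Require Import Reals ZArith Lra Lia Psatz FunctionalExtensionality.
From Coquelicot Require Import Coquelicot.

Open Scope R_scope.

Section SquareSummableRecurrence.

Variables (g : nat -> R) (K : R) (N : nat).
Hypotheses (K_gt2 : 2 < K) (g_ge0 : forall n, 0 <= g n)
  (g_sq : ex_series (fun n => g n ^ 2))
  (g_rec : forall n, (N <= n)%nat -> K * g (S n) <= g (S (S n)) + g n).

Lemma square_summable_recurrence_step n :
  (N <= n)%nat -> g (S n) <= 2 / K * g n.
Proof.
  intros Hn.
  set (r := 2 / K); set (s := K / 2).
  assert (Hrs : r * s = 1) by (unfold r, s; field; lra).
  assert (Hs1 : 1 <= s) by (unfold s; lra).
  assert (HKrs : r + s <= K).
  { unfold r, s. enough (2 / K <= K / 2) by lra.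
    apply Rmult_le_reg_r with (2 * K); [nra|]. field_simplify; nra. }
  (* As r s = 1 and r + s <= K, the recurrence factors: D grows by a factor s >= 1. *)
  set (D := fun m => g (S m) - r * g m).
  assert (D_grows : forall m, (N <= m)%nat -> s * D m <= D (S m)).
  { intros m Hm. unfold D. specialize (g_rec m Hm).
    pose proof (g_ge0 m); pose proof (g_ge0 (S m)).
    assert (0 <= (K - r - s) * g (S m)) by (apply Rmult_le_pos; lra).
    assert (s * (r * g m) = g m) by (rewrite <- Rmult_assoc, (Rmult_comm s r), Hrs; ring).
    nra. }
  destruct (Rle_dec (D n) 0) as [HD|HD]; [unfold D in HD; lra|].
  apply Rnot_le_lt in HD. exfalso.
  assert (D_bound : forall k, D n <= D (n + k)%nat).
  { induction k as [|k IH]; [rewrite Nat.add_0_r; lra|].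
    rewrite Nat.add_succ_r. specialize (D_grows (n + k)%nat ltac:(lia)). nra. }
  (* But then g stays above D n > 0, so g n ^ 2 cannot tend to 0. *)
  apply ex_series_lim_0, is_lim_seq_spec in g_sq.
  destruct (g_sq (mkposreal (D n ^ 2) ltac:(apply pow_lt; lra))) as [M HM].
  specialize (HM (S (n + M)) ltac:(lia)); specialize (D_bound M).
  pose proof (g_ge0 (n + M)%nat); pose proof (g_ge0 (S (n + M))).
  assert (D n <= g (S (n + M))) by (unfold D in *; nra).
  rewrite Rminus_0_r, Rabs_right in HM by (apply Rle_ge; simpl; nra).
  simpl in HM. nra.
Qed.

Lemma square_summable_recurrence_geometric_decay k :
  g (N + k)%nat <= (2 / K) ^ k * g N.
Proof.
  induction k as [|k IH]; [rewrite Nat.add_0_r; simpl; lra|].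
  rewrite Nat.add_succ_r.
  pose proof (square_summable_recurrence_step (N + k) ltac:(lia)).
  assert (0 <= 2 / K) by (apply Rlt_le, Rdiv_lt_0_compat; lra).
  simpl. nra.
Qed.

End SquareSummableRecurrence.

Lemma exp_mult_INR_add (a : R) (N k : nat) :
  exp (a * INR (N + k)) = exp (a * INR N) * exp a ^ k.
Proof.
  induction k as [|k IH]; [rewrite Nat.add_0_r; simpl; ring|].
  rewrite Nat.add_succ_r, S_INR, Rmult_plus_distr_l, Rmult_1_r, exp_plus, IH.
  simpl. ring.
Qed.

Lemma ex_series_exp_weighted_sq (g : nat -> R) (a r : R) (N : nat) :
  0 < r -> exp a * r < 1 -> (forall n, 0 <= g n) ->
  (forall k, g (N + k)%nat <= r ^ k * g N) ->
  ex_series (fun n => (exp (a * INR n) * g n) ^ 2).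
Proof.
  intros Hr Har Hg Hdec.
  set (q := exp a * r).
  assert (Hq : 0 <= q) by (apply Rmult_le_pos; [apply Rlt_le, exp_pos | lra]).
  apply (ex_series_incr_n _ N).
  apply (@ex_series_le R_AbsRing R_CompleteNormedModule)
    with (b := fun k => (exp (a * INR N) * g N) ^ 2 * (q ^ 2) ^ k).
  - intros k. rewrite exp_mult_INR_add.
    pose proof (exp_pos a); pose proof (exp_pos (a * INR N)).
    assert (0 < exp a ^ k) by (apply pow_lt; lra).
    pose proof (Hg (N + k)%nat); specialize (Hdec k).
    set (x := exp (a * INR N) * exp a ^ k * g (N + k)%nat).
    assert (0 <= x) by (unfold x; repeat apply Rmult_le_pos; lra).
    assert (Hx : x <= exp (a * INR N) * g N * q ^ k).
    { unfold q. rewrite Rpow_mult_distr.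
      replace (exp (a * INR N) * g N * (exp a ^ k * r ^ k))
        with (exp (a * INR N) * exp a ^ k * (r ^ k * g N)) by ring.
      unfold x. apply Rmult_le_compat_l; [apply Rmult_le_pos|]; lra. }
    change (norm (x ^ 2)) with (Rabs (x ^ 2)).
    rewrite Rabs_right by (apply Rle_ge, pow_le; lra).
    rewrite <- pow_mult, Nat.mul_comm, pow_mult, <- Rpow_mult_distr.
    apply pow_incr; lra.
  - apply (ex_series_ext (fun k => scal ((exp (a * INR N) * g N) ^ 2) ((q ^ 2) ^ k)));
      [reflexivity|].
    apply (@ex_series_scal R_AbsRing R_NormedModule), ex_series_geom.
    rewrite Rabs_right by (apply Rle_ge, pow_le; lra). unfold q in *. simpl. nra.
Qed.

Lemma Cmod_Ta (a : R) (u : Z -> C) (j : Z) :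
  Cmod (Ta a u j) = exp (a * IZR (Z.abs j)) * Cmod (u j).
Proof.
  unfold Ta. rewrite Cmod_mult, Cmod_R, Rabs_right; [reflexivity|].
  apply Rle_ge, Rlt_le, exp_pos.
Qed.

Lemma Tainv_Ta (a : R) (u : Z -> C) : Tainv a (Ta a u) = u.
Proof.
  apply functional_extensionality; intros j. unfold Tainv, Ta.
  rewrite Cmult_assoc, <- RtoC_mult, <- exp_plus, Rplus_opp_l, exp_0.
  apply Cmult_1_l.
Qed.

Lemma Ta_neq0 (a : R) (u : Z -> C) (j : Z) : u j <> RtoC 0 -> Ta a u j <> RtoC 0.
Proof.
  intros Hu H. apply Hu, Cmod_eq_0.
  apply (f_equal Cmod) in H. rewrite Cmod_Ta, Cmod_0 in H.
  pose proof (exp_pos (a * IZR (Z.abs j))).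
  destruct (Rmult_integral _ _ H); [lra | assumption].
Qed.

Lemma Ta_conj_eigen (V : Z -> R) (e a : R) (u : Z -> C) :
  (forall j, Hop V u j = Cmult (RtoC e) (u j)) ->
  forall j, Ta a (Hop V (Tainv a (Ta a u))) j = Cmult (RtoC e) (Ta a u j).
Proof. intros Heig j. rewrite Tainv_Ta. unfold Ta. rewrite Heig. ring. Qed.

Lemma l2_Ta (a r : R) (N : nat) (u : Z -> C) :
  0 < r -> exp a * r < 1 ->
  (forall k, Cmod (u (Z.of_nat (N + k))) <= r ^ k * Cmod (u (Z.of_nat N))) ->
  (forall k, Cmod (u (- Z.of_nat (N + k))%Z) <= r ^ k * Cmod (u (- Z.of_nat N)%Z)) ->
  l2 (Ta a u).
Proof.
  intros Hr Har Hp Hm. split.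
  - apply (ex_series_ext (fun n => (exp (a * INR n) * Cmod (u (Z.of_nat n))) ^ 2)).
    { intros n. rewrite Cmod_Ta, Z.abs_eq, <- INR_IZR_INZ by lia. reflexivity. }
    apply (ex_series_exp_weighted_sq _ a r N); auto using Cmod_ge_0.
  - apply (ex_series_ext (fun n => (exp (a * INR n) * Cmod (u (- Z.of_nat n)%Z)) ^ 2)).
    { intros n. rewrite Cmod_Ta, Z.abs_opp, Z.abs_eq, <- INR_IZR_INZ by lia. reflexivity. }
    apply (ex_series_exp_weighted_sq _ a r N); auto using Cmod_ge_0.
Qed.

Lemma Hop_eigen_Cmod_recurrence (V : Z -> R) (e : R) (u : Z -> C) :
  (forall j, Hop V u j = Cmult (RtoC e) (u j)) ->
  forall j, Rabs (2 + V j - e) * Cmod (u j) <= Cmod (u (j + 1)%Z) + Cmod (u (j - 1)%Z).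
Proof.
  intros Heig j. specialize (Heig j). unfold Hop, lap in Heig.
  assert (E : Cplus (u (j + 1)%Z) (u (j - 1)%Z) = Cmult (RtoC (2 + V j - e)) (u j)).
  { rewrite RtoC_minus, RtoC_plus.
    transitivity (Cplus (Cmult (Cminus (Cplus (RtoC 2) (RtoC (V j))) (RtoC e)) (u j))
      (Cminus (Cmult (RtoC e) (u j))
        (Cplus (Copp (Cplus (Cminus (u (j + 1)%Z) (Cmult (RtoC 2) (u j))) (u (j - 1)%Z)))
               (Cmult (RtoC (V j)) (u j))))); [ring|].
    rewrite Heig. ring. }
  rewrite <- Cmod_R, <- Cmod_mult, <- E. apply Cmod_triangle.
Qed.

Lemma potential_gap (V : Z -> R) (e : R) :
  vanishes_at_infinity V -> e < 0 \/ 4 < e ->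
  exists K N, 2 < K /\ forall j, (N < Z.abs j)%Z -> K <= Rabs (2 + V j - e).
Proof.
  intros hV he.
  set (d := Rabs (2 - e) - 2).
  assert (Hd : 0 < d) by (unfold d, Rabs; destruct Rcase_abs; lra).
  destruct (hV (d / 2) ltac:(lra)) as [N HN].
  exists (2 + d / 2), N. split; [lra|]. intros j Hj. specialize (HN j Hj).
  pose proof (Rabs_triang (2 + V j - e) (- V j)) as Htri.
  rewrite Rabs_Ropp in Htri.
  replace (2 + V j - e + - V j) with (2 - e) in Htri by ring.
  unfold d in *. lra.
Qed.

Lemma eigenfunction_geometric_decay (V : Z -> R) (e : R) (u : Z -> C) :
  vanishes_at_infinity V -> e < 0 \/ 4 < e -> l2 u ->
  (forall j, Hop V u j = Cmult (RtoC e) (u j)) ->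
  exists r N, 0 < r < 1 /\
    (forall k, Cmod (u (Z.of_nat (N + k))) <= r ^ k * Cmod (u (Z.of_nat N))) /\
    (forall k, Cmod (u (- Z.of_nat (N + k))%Z) <= r ^ k * Cmod (u (- Z.of_nat N)%Z)).
Proof.
  intros hV he [Hsp Hsm] Heig.
  destruct (potential_gap V e hV he) as [K [N0 [HK Hgap]]].
  pose proof (Hop_eigen_Cmod_recurrence V e u Heig) as Hrec.
  exists (2 / K), (Z.to_nat (Z.abs N0)). split; [|split].
  - split; [apply Rdiv_lt_0_compat; lra|].
    apply Rmult_lt_reg_r with K; [lra|]. field_simplify; lra.
  - intros k.
    apply (square_summable_recurrence_geometric_decay (fun n => Cmod (u (Z.of_nat n))) K);
      auto using Cmod_ge_0.
    intros n Hn. specialize (Hrec (Z.of_nat (S n))).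
    replace (Z.of_nat (S n) + 1)%Z with (Z.of_nat (S (S n))) in Hrec by lia.
    replace (Z.of_nat (S n) - 1)%Z with (Z.of_nat n) in Hrec by lia.
    specialize (Hgap (Z.of_nat (S n)) ltac:(lia)).
    pose proof (Cmod_ge_0 (u (Z.of_nat (S n)))). nra.
  - intros k.
    apply (square_summable_recurrence_geometric_decay (fun n => Cmod (u (- Z.of_nat n)%Z)) K);
      auto using Cmod_ge_0.
    intros n Hn. specialize (Hrec (- Z.of_nat (S n))%Z).
    replace (- Z.of_nat (S n) + 1)%Z with (- Z.of_nat n)%Z in Hrec by lia.
    replace (- Z.of_nat (S n) - 1)%Z with (- Z.of_nat (S (S n)))%Z in Hrec by lia.
    specialize (Hgap (- Z.of_nat (S n))%Z ltac:(lia)).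
    pose proof (Cmod_ge_0 (u (- Z.of_nat (S n))%Z)). nra.
Qed.

Theorem lemmaA1 (V : Z -> R) (e : R)
  (hV : vanishes_at_infinity V)
  (he : (e < 0)%R \/ (4 < e)%R)
  (hker : ker_dim_one V e) :
  exists a0 : R, (0 < a0)%R /\
  exists (E : R -> R) (Phi : R -> Z -> C),
    (forall a : R, (0 < a < a0)%R ->
       l2 (Phi a) /\ (exists j, Phi a j <> RtoC 0) /\
       (forall j, Ta a (Hop V (Tainv a (Phi a))) j = Cmult (RtoC (E a)) (Phi a j))) /\
    (forall eps : R, (0 < eps)%R -> exists delta : R, (0 < delta)%R /\
       forall a : R, (0 < a < a0)%R -> (a < delta)%R -> (Rabs (E a - e) < eps)%R).
Proof.
  destruct hker as [u [Hu [[j0 Hj0] [Heig _]]]].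
  destruct (eigenfunction_geometric_decay V e u hV he Hu Heig)
    as [r [N [[Hr0 Hr1] [Hp Hm]]]].
  assert (Hlnr : ln r < 0) by (rewrite <- ln_1; apply ln_increasing; lra).
  exists (- ln r). split; [lra|].
  exists (fun _ => e), (fun a => Ta a u). split.
  - intros a [Ha0 Ha].
    assert (Har : exp a * r < 1).
    { rewrite <- (exp_ln r Hr0), <- exp_plus, <- exp_0. apply exp_increasing. lra. }
    split; [|split].
    + exact (l2_Ta a r N u Hr0 Har Hp Hm).
    + exists j0. exact (Ta_neq0 a u j0 Hj0).
    + exact (Ta_conj_eigen V e a u Heig).
  - intros eps Heps. exists 1. split; [lra|]. intros a _ _.
    rewrite Rminus_diag, Rabs_R0. exact Heps.
Qed.
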